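(* Let $\mathbf{x}_r=(\mathbf{p}_r,\mathbf{n}_r)$ and $\mathbf{x}_i=(\mathbf{p}_i,\mathbf{n}_i)$ be oriented points in $\mathbb{R}^3\times\mathbb{R}^3$ with unit normals $\|\mathbf{n}_r\|=\|\mathbf{n}_i\|=1$ and $\mathbf{p}_r\neq\mathbf{p}_i$, and likewise let $\mathbf{x}_r'=(\mathbf{p}_r',\mathbf{n}_r')$, $\mathbf{x}_i'=(\mathbf{p}_i',\mathbf{n}_i')$ be oriented points with unit normals and $\mathbf{p}_r'\neq\mathbf{p}_i'$. Suppose the two pairs share the same reference point and reference normal, $\mathbf{p}_r=\mathbf{p}_r'=\mathbf{0}$ and $\mathbf{n}_r=\mathbf{n}_r'$. Then $\mathbf{f}(\mathbf{x}_r,\mathbf{x}_i)=\mathbf{f}(\mathbf{x}_r',\mathbf{x}_i')$ if and only if there exists an orthogonal matrix $\mathbf{Q}\in O(3)$ with $\mathbf{Q}\mathbf{n}_r=\mathbf{n}_r$, $\mathbf{Q}\mathbf{n}_i=\mathbf{n}_i'$ and $\mathbf{Q}\mathbf{p}_i=\mathbf{p}_i'$; that is, the point pair feature determines the oriented pair up to a rotation about, or a reflection in a plane containing, the axis spanned by the reference normal $\mathbf{n}_r$.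
   Context: For oriented points $\mathbf{x}_r=(\mathbf{p}_r,\mathbf{n}_r)$, $\mathbf{x}_i=(\mathbf{p}_i,\mathbf{n}_i)$ with $\mathbf{p}_r\ne\mathbf{p}_i$, the point pair feature is $\mathbf{f}(\mathbf{x}_r,\mathbf{x}_i)=(\angle(\mathbf{n}_r,\mathbf{d}),\angle(\mathbf{n}_i,\mathbf{d}),\angle(\mathbf{n}_r,\mathbf{n}_i),\|\mathbf{d}\|_2)\in\mathbb{R}^4$, where $\mathbf{d}=\mathbf{p}_r-\mathbf{p}_i$ and $\angle(\mathbf{u},\mathbf{v})\in[0,\pi]$ denotes the unsigned angle between nonzero vectors $\mathbf{u},\mathbf{v}$. *)

From mathcomp Require Import all_boot all_order all_algebra.
From mathcomp Require Import all_classical all_reals all_analysis.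
Set Implicit Arguments. Unset Strict Implicit. Unset Printing Implicit Defensive.
Import Order.TTheory GRing.Theory Num.Theory.
Local Open Scope ring_scope.

Definition dot3 {R : realType} (u v : 'cV[R]_3) : R := (u^T *m v) 0 0.
Definition norm3 {R : realType} (u : 'cV[R]_3) : R := Num.sqrt (dot3 u u).

Definition angle3 {R : realType} (u v : 'cV[R]_3) : R :=
  acos (dot3 u v / (norm3 u * norm3 v)).

Definition ppf {R : realType} (pr nr pi ni : 'cV[R]_3) : R * R * R * R :=
  let d := pr - pi in
  (angle3 nr d, angle3 ni d, angle3 nr ni, norm3 d).

Definition orthogonal3 {R : realType} (Q : 'M[R]_3) : Prop := Q^T *m Q = 1%:M.

From mathcomp Require Import all_boot all_order all_algebra.
From mathcomp Require Import all_classical all_reals all_analysis.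
From mathcomp Require Import ring.
Set Implicit Arguments. Unset Strict Implicit.
Import Order.TTheory GRing.Theory Num.Theory.
Local Open Scope ring_scope.

(* Since [dot3 u v = |u| |v| cos (angle3 u v)], equal features give equal inner
   products among n_r, n_i, p_i and n_r, n_i', p_i'.  Two Householder
   reflections then realise the congruence: the first sends n_i to n_i', the
   second sends the image of p_i to p_i', and each fixes every vector with the
   same inner product against both ends of the move, in particular n_r and,
   for the second one, n_i'.  Conversely orthogonal maps preserve inner
   products, hence angles, norms and the feature. *)

Section Dot3.
Context {R : realType}.
Implicit Types u v w : 'cV[R]_3.

Lemma dot3C u v : dot3 u v = dot3 v u.
Proof. by rewrite /dot3 -[u^T *m v]trmxK trmx_mul trmxK mxE. Qed.

Lemma dot3Dr u v w : dot3 u (v + w) = dot3 u v + dot3 u w.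
Proof. by rewrite /dot3 mulmxDr mxE. Qed.

Lemma dot3Zr u v (a : R) : dot3 u (a *: v) = a * dot3 u v.
Proof. by rewrite /dot3 -scalemxAr mxE. Qed.

Lemma dot3Br u v w : dot3 u (v - w) = dot3 u v - dot3 u w.
Proof. by rewrite dot3Dr -scaleN1r dot3Zr mulN1r. Qed.

Lemma dot3Zl u v (a : R) : dot3 (a *: v) u = a * dot3 v u.
Proof. by rewrite !(dot3C _ u) dot3Zr. Qed.

Lemma dot3Bl u v w : dot3 (v - w) u = dot3 v u - dot3 w u.
Proof. by rewrite !(dot3C _ u) dot3Br. Qed.

Lemma dot30l v : dot3 0 v = 0.
Proof. by rewrite /dot3 trmx0 mul0mx mxE. Qed.

Lemma dot3E u v : dot3 u v = \sum_i u i 0 * v i 0.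
Proof. by rewrite /dot3 mxE; apply: eq_bigr => i _; rewrite mxE. Qed.

Lemma dot3_ge0 u : 0 <= dot3 u u.
Proof. by rewrite dot3E; apply: sumr_ge0 => i _; rewrite -expr2 sqr_ge0. Qed.

Lemma dot3_eq0 u : (dot3 u u == 0) = (u == 0).
Proof.
apply/eqP/eqP => [|->]; last exact: dot30l.
rewrite dot3E => /psumr_eq0P sq0; apply/matrixP => i j.
rewrite (ord1 j) mxE; apply/eqP; rewrite -[_ == 0]orbb -mulf_eq0.
by rewrite sq0 // => k _; rewrite -expr2 sqr_ge0.
Qed.

Lemma dot3_gt0 u : u != 0 -> 0 < dot3 u u.
Proof. by rewrite lt_def dot3_ge0 dot3_eq0 andbT. Qed.

Lemma dot3_mulmxl (M : 'M[R]_3) u v : dot3 (M *m u) v = dot3 u (M^T *m v).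
Proof. by rewrite /dot3 trmx_mul mulmxA. Qed.

Lemma mulmx_col_dot3 u w : u *m (u^T *m w) = dot3 u w *: u.
Proof. by rewrite [u^T *m w]mx11_scalar mul_mx_scalar. Qed.

Lemma cauchy_schwarz3 u v : dot3 u v ^+ 2 <= dot3 u u * dot3 v v.
Proof.
have [->|u0] := eqVneq u 0; first by rewrite !dot30l expr0n /= mul0r.
have := dot3_ge0 (dot3 u u *: v - dot3 u v *: u).
rewrite !dot3Bl !dot3Br !dot3Zl !dot3Zr (dot3C v u).
have -> : dot3 u u * (dot3 u u * dot3 v v) - dot3 u u * (dot3 u v * dot3 u v) -
    (dot3 u v * (dot3 u u * dot3 u v) - dot3 u v * (dot3 u v * dot3 u u)) =
    dot3 u u * (dot3 u u * dot3 v v - dot3 u v ^+ 2) by ring.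
by rewrite pmulr_rge0 ?dot3_gt0 // subr_ge0.
Qed.

End Dot3.

Section Norm3.
Context {R : realType}.
Implicit Types u v : 'cV[R]_3.

Lemma norm3_sq u : norm3 u ^+ 2 = dot3 u u.
Proof. by rewrite /norm3 sqr_sqrtr // dot3_ge0. Qed.

Lemma norm3_ge0 u : 0 <= norm3 u.
Proof. exact: sqrtr_ge0. Qed.

Lemma norm3_eq0 u : (norm3 u == 0) = (u == 0).
Proof. by rewrite -sqrf_eq0 norm3_sq dot3_eq0. Qed.

Lemma ler_norm_dot3 u v : `|dot3 u v| <= norm3 u * norm3 v.
Proof.
rewrite -ler_sqr ?nnegrE ?mulr_ge0 ?norm3_ge0 //.
by rewrite real_normK ?num_real // exprMn !norm3_sq cauchy_schwarz3.
Qed.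

(* Also true when [u] or [v] vanishes, whatever the value of [acos] at [0 / 0]. *)
Lemma dot3_angle3 u v : dot3 u v = norm3 u * norm3 v * cos (angle3 u v).
Proof.
have [uv0|uv_neq0] := eqVneq (norm3 u * norm3 v) 0.
  rewrite uv0 mul0r; move: uv0 => /eqP; rewrite mulf_eq0 !norm3_eq0.
  by case/orP => /eqP->; rewrite ?dot30l // dot3C dot30l.
have uv_gt0 : 0 < norm3 u * norm3 v by rewrite lt_def uv_neq0 mulr_ge0 ?norm3_ge0.
rewrite /angle3 acosK; first by rewrite mulrC divfK.
rewrite in_itv /= -ler_norml normf_div (gtr0_norm uv_gt0).
by rewrite ler_pdivrMr // mul1r ler_norm_dot3.
Qed.

Lemma eq_dot3_angle3 u v u' v' :
  angle3 u v = angle3 u' v' -> norm3 u = norm3 u' -> norm3 v = norm3 v' ->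
  dot3 u v = dot3 u' v'.
Proof. by move=> eq_a eq_u eq_v; rewrite dot3_angle3 eq_a eq_u eq_v -dot3_angle3. Qed.

End Norm3.

Section Orthogonal3.
Context {R : realType}.
Implicit Types (a b c u v w x y z : 'cV[R]_3) (A B Q : 'M[R]_3).

Lemma orthogonal3_mul A B : orthogonal3 A -> orthogonal3 B -> orthogonal3 (A *m B).
Proof.
rewrite /orthogonal3 => hA hB.
by rewrite trmx_mul mulmxA -(mulmxA _ _ A) hA mulmx1 hB.
Qed.

Lemma orthogonal3_1 : orthogonal3 (1%:M : 'M[R]_3).
Proof. by rewrite /orthogonal3 trmx1 mulmx1. Qed.

Lemma dot3_orthogonal Q u v : orthogonal3 Q -> dot3 (Q *m u) (Q *m v) = dot3 u v.
Proof. by move=> hQ; rewrite dot3_mulmxl mulmxA hQ mul1mx. Qed.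

Lemma norm3_orthogonal Q u : orthogonal3 Q -> norm3 (Q *m u) = norm3 u.
Proof. by move=> hQ; rewrite /norm3 dot3_orthogonal. Qed.

Lemma angle3_orthogonal Q u v : orthogonal3 Q -> angle3 (Q *m u) (Q *m v) = angle3 u v.
Proof. by move=> hQ; rewrite /angle3 !norm3_orthogonal ?dot3_orthogonal. Qed.

Lemma ppf_orthogonal Q pr nr pi ni : orthogonal3 Q ->
  ppf (Q *m pr) (Q *m nr) (Q *m pi) (Q *m ni) = ppf pr nr pi ni.
Proof. by move=> hQ; rewrite /ppf -mulmxBr !angle3_orthogonal ?norm3_orthogonal. Qed.

Definition householder u : 'M[R]_3 := 1%:M - (2 / dot3 u u) *: (u *m u^T).

Lemma householder_mul u w : householder u *m w = w - (2 / dot3 u u * dot3 u w) *: u.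
Proof. by rewrite mulmxBl mul1mx -scalemxAl -mulmxA mulmx_col_dot3 scalerA. Qed.

Lemma householder_orthogonal u : u != 0 -> orthogonal3 (householder u).
Proof.
move=> u0; set c := 2 / dot3 u u; set P := u *m u^T.
have uu0 : dot3 u u != 0 by rewrite dot3_eq0.
have PP : P *m P = dot3 u u *: P by rewrite mulmxA -(mulmxA u) mulmx_col_dot3 scalemxAl.
have HT : (householder u)^T = householder u.
  by rewrite /householder linearB /= trmx1 linearZ /= trmx_mul trmxK.
rewrite /orthogonal3 HT /householder -/c -/P.
rewrite mulmxBl mul1mx mulmxBr mulmx1 -!scalemxAl -scalemxAr PP !scalerA.
have -> : c * c * dot3 u u = c + c by rewrite /c; field.
rewrite scalerDl; set a := c *: P.
have -> : a - (a + a) = - a by rewrite opprD addrA subrr add0r.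
by rewrite opprK subrK.
Qed.

(* The reflection in the perpendicular bisector plane of [x] and [y]. *)
Lemma householder_exchange x y : dot3 x x = dot3 y y ->
  exists Q, [/\ orthogonal3 Q, Q *m x = y &
    forall z, dot3 z x = dot3 z y -> Q *m z = z].
Proof.
move=> xy_eq; have [<-|xy_neq] := eqVneq x y.
  by exists 1%:M; split=> [|//|z _]; rewrite ?mul1mx //; apply: orthogonal3_1.
have d0 : x - y != 0 by rewrite subr_eq0.
have dd0 : dot3 (x - y) (x - y) != 0 by rewrite dot3_eq0.
exists (householder (x - y)); split; first exact: householder_orthogonal.
  rewrite householder_mul.
  have -> : 2 / dot3 (x - y) (x - y) * dot3 (x - y) x = 1.
    move: dd0; rewrite !dot3Bl !dot3Br xy_eq (dot3C y x) => dd0.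
    by apply: (mulIf dd0); rewrite mul1r mulrAC divfK //; ring.
  by rewrite scale1r opprB addrC subrK.
move=> z zxy; rewrite householder_mul (dot3C _ z) (dot3Br z) zxy.
by rewrite subrr mulr0 scale0r subr0.
Qed.

Lemma orthogonal3_transport a b c b' c' :
  dot3 b b = dot3 b' b' -> dot3 c c = dot3 c' c' -> dot3 b c = dot3 b' c' ->
  dot3 a b = dot3 a b' -> dot3 a c = dot3 a c' ->
  exists Q, [/\ orthogonal3 Q, Q *m a = a, Q *m b = b' & Q *m c = c'].
Proof.
move=> bb cc bc ab ac.
have [Q1 [Q1_orth Q1b Q1_fix]] := householder_exchange bb.
have Q1a := Q1_fix _ ab.
have Q1c_norm : dot3 (Q1 *m c) (Q1 *m c) = dot3 c' c' by rewrite dot3_orthogonal.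
have [Q2 [Q2_orth Q2c Q2_fix]] := householder_exchange Q1c_norm.
exists (Q2 *m Q1); rewrite -!mulmxA Q1a Q1b Q2c; split=> //.
- exact: orthogonal3_mul.
- by apply: Q2_fix; rewrite -{1}Q1a dot3_orthogonal.
- by apply: Q2_fix; rewrite -{1}Q1b dot3_orthogonal.
Qed.

End Orthogonal3.

Theorem proposition1 (R : realType) (pr nr pi ni pr' nr' pi' ni' : 'cV[R]_3) :
  norm3 nr = 1 -> norm3 ni = 1 -> pr <> pi ->
  norm3 nr' = 1 -> norm3 ni' = 1 -> pr' <> pi' ->
  pr = 0 -> pr' = 0 -> nr = nr' ->
  (ppf pr nr pi ni = ppf pr' nr' pi' ni' <->
   exists Q : 'M[R]_3, orthogonal3 Q /\ Q *m nr = nr /\ Q *m ni = ni' /\ Q *m pi = pi').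
Proof.
move=> _ hni _ _ hni' _ -> -> <-; split; last first.
  case=> Q [hQ [Qnr [<- <-]]].
  by rewrite -(ppf_orthogonal 0 nr pi ni hQ) mulmx0 Qnr.
rewrite /ppf !sub0r => -[a_nr_p a_ni_p a_nr_ni n_p].
have n_ni : norm3 ni = norm3 ni' by rewrite hni hni'.
have ni_sq : dot3 ni ni = dot3 ni' ni' by rewrite -!norm3_sq n_ni.
have p_sq : dot3 (- pi) (- pi) = dot3 (- pi') (- pi') by rewrite -!norm3_sq n_p.
have ni_p := eq_dot3_angle3 a_ni_p n_ni n_p.
have nr_ni := eq_dot3_angle3 a_nr_ni erefl n_ni.
have nr_p := eq_dot3_angle3 a_nr_p erefl n_p.
have [Q [hQ Qnr Qni Qp]] := orthogonal3_transport ni_sq p_sq ni_p nr_ni nr_p.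
by exists Q; split; [|split; [|split]] => //; apply: oppr_inj; rewrite -mulmxN.
Qed.
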